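(* Consider the Long-Short-Range Message-Passing (LSR-MP) architecture described in the context. Suppose that (i) the short-range module is rotation-invariant in its scalar output, i.e. $\textsc{Short}_h(Z, R\vec p) = \textsc{Short}_h(Z,\vec p)$ for all $R\in SO(3)$, and its vectorial output transforms by rotation, $\textsc{Short}_v(Z,R\vec p) = R\,\textsc{Short}_v(Z,\vec p)$; and (ii) the long-range bipartite module is rotation-invariant in its scalar output, i.e. for all $R\in SO(3)$ and all inputs, $$\textsc{Long}_x(h,H,x^0,R\vec\mu^0,R\vec p,R\vec V,R\vec P)=\textsc{Long}_x(h,H,x^0,\vec\mu^0,\vec p,\vec V,\vec P).$$ Then the scalar output $h_{\text{out}}$ of the LSR-MP architecture is rotation-invariant: replacing every atomic position $\vec p_i$ by $R\vec p_i$ (for any $R\in SO(3)$) leaves $h_{\text{out}}$ unchanged.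
   Context: A molecule has $n$ atoms with atomic numbers $Z=(z_1,\dots,z_n)$ and positions $\vec p_1,\dots,\vec p_n\in\mathbb{R}^3$; a rotation $R\in SO(3)$ acts by $\vec p_i\mapsto R\vec p_i$ and on a vectorial embedding $\vec w\in\mathbb{R}^{3\times d}$ by $\vec w\mapsto R\vec w$. Scalar embeddings lie in $\mathbb{R}^d$. LSR-MP consists of: (1) a short-range module, a map $(Z,\vec p)\mapsto (h,\vec v)=(\textsc{Short}_h(Z,\vec p),\textsc{Short}_v(Z,\vec p))$ producing for each atom $i$ a scalar embedding $h_i\in\mathbb{R}^d$ and a vectorial embedding $\vec v_i\in\mathbb{R}^{3\times d}$. (2) A fragmentation module: a fixed assignment of the atoms into fragments $S(1),\dots,S(m)\subseteq\{1,\dots,n\}$, and fragment embeddings $H_j=\sum_{i\in S(j)}\alpha_i\odot h_i$, $\vec V_j=\sum_{i\in S(j)}\beta_i\odot\vec v_i$, $\vec P_j=\sum_{i\in S(j)}\gamma_i\vec p_i$, where $\alpha_i,\beta_i\in\mathbb{R}^d$ (acting channelwise, $\odot$ the Hadamard product) and $\gamma_i\in\mathbb{R}$ are fixed weights not affected by the rotation. (3) A long-range bipartite module: initial long-range embeddings $x^0_i=\textsc{Dense}(h_i)$, $\vec\mu^0_i=U(\vec v_i)$, and a map producing long-range scalar embeddings $x=\textsc{Long}_x(h,H,x^0,\vec\mu^0,\vec p,\vec V,\vec P)$ and vectorial embeddings $\vec\mu=\textsc{Long}_\mu(h,H,x^0,\vec\mu^0,\vec p,\vec V,\vec P)$. (4)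 Outputs $h_{\text{out}}=\textsc{Dense}([h,x])$ and $\vec v_{\text{out}}=U([\vec v,\vec\mu])$, where $[\cdot,\cdot]$ is channel concatenation, $\textsc{Dense}$ is a linear layer with bias followed by an activation acting on scalar features, and $U$ is a linear map without bias acting only on the channel dimension (so $U(R\vec w)=RU(\vec w)$). *)

From HB Require Import structures.
From mathcomp Require Import all_boot all_order all_algebra.
From mathcomp Require Import reals.
Set Implicit Arguments. Unset Strict Implicit. Unset Printing Implicit Defensive.
Import Order.TTheory GRing.Theory Num.Theory.
Local Open Scope ring_scope.

(* Positions are column vectors 'cV_3; vectorial embeddings are 3 x d
   matrices; scalar embeddings are row vectors 'rV_d.  A rotation Q acts
   by left multiplication Q *m _. *)

Definition SO3 {R : realType} (Q : 'M[R]_3) : bool :=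
  (Q *m Q^T == 1%:M) && (\det Q == 1).

Definition hadr {R : realType} {d : nat} (a b : 'rV[R]_d) : 'rV[R]_d :=
  \row_k (a 0 k * b 0 k).

Definition hadv {R : realType} {d : nat} (a : 'rV[R]_d) (w : 'M[R]_(3, d))
  : 'M[R]_(3, d) := \matrix_(r, k) (a 0 k * w r k).

Definition Dense {R : realType} {k l : nat} (W : 'M[R]_(k, l)) (b : 'rV[R]_l)
  (sigma : R -> R) (u : 'rV[R]_k) : 'rV[R]_l :=
  map_mx sigma (u *m W + b).

Definition Ulin {R : realType} {k l : nat} (M : 'M[R]_(k, l))
  (w : 'M[R]_(3, k)) : 'M[R]_(3, l) := w *m M.

(* Scalar output h_out of the LSR-MP architecture for a molecule (Z, p).
   d : short-range channels, e : long-range initial channels,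
   f : long-range scalar output channels, g : output channels. *)
Definition lsrmp_hout {R : realType} {n m d e f g : nat}
  (Short_h : ('I_n -> nat) -> ('I_n -> 'cV[R]_3) -> 'I_n -> 'rV[R]_d)
  (Short_v : ('I_n -> nat) -> ('I_n -> 'cV[R]_3) -> 'I_n -> 'M[R]_(3, d))
  (S : 'I_m -> {set 'I_n})
  (alpha beta : 'I_n -> 'rV[R]_d) (gamma : 'I_n -> R)
  (W0 : 'M[R]_(d, e)) (b0 : 'rV[R]_e) (sigma0 : R -> R)
  (U0 : 'M[R]_(d, e))
  (Long_x : ('I_n -> 'rV[R]_d) -> ('I_m -> 'rV[R]_d) -> ('I_n -> 'rV[R]_e) ->
            ('I_n -> 'M[R]_(3, e)) -> ('I_n -> 'cV[R]_3) ->
            ('I_m -> 'M[R]_(3, d)) -> ('I_m -> 'cV[R]_3) -> 'I_n -> 'rV[R]_f)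
  (W1 : 'M[R]_(d + f, g)) (b1 : 'rV[R]_g) (sigma1 : R -> R)
  (Z : 'I_n -> nat) (p : 'I_n -> 'cV[R]_3) : 'I_n -> 'rV[R]_g :=
  let h := Short_h Z p in
  let v := Short_v Z p in
  let H := fun j => \sum_(i in S j) hadr (alpha i) (h i) in
  let V := fun j => \sum_(i in S j) hadv (beta i) (v i) in
  let P := fun j => \sum_(i in S j) gamma i *: p i in
  let x0 := fun i => Dense W0 b0 sigma0 (h i) in
  let mu0 := fun i => Ulin U0 (v i) in
  let x := Long_x h H x0 mu0 p V P in
  fun i => Dense W1 b1 sigma1 (row_mx (h i) (x i)).

From HB Require Import structures.
From mathcomp Require Import all_boot all_order all_algebra.
From mathcomp Require Import reals.
From Stdlib Require Import FunctionalExtensionality.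
Import Order.TTheory GRing.Theory Num.Theory.
Local Open Scope ring_scope.

(* Rotations enter the network only through the positions, the vectorial
   embeddings and the fragment aggregates built from them.  All of these are
   obtained by maps acting on the channel side (Hadamard weights, U, scalar
   weights), so they commute with left multiplication by any 3 x 3 matrix.
   Hence rotating the input rotates every vectorial argument of Long_x while
   leaving the scalar ones unchanged, and the invariance of Short_h and
   Long_x yields the invariance of h_out. *)

Lemma mulmx_hadv (R : realType) (d : nat) (Q : 'M[R]_3) (a : 'rV[R]_d)
    (w : 'M[R]_(3, d)) :
  Q *m hadv a w = hadv a (Q *m w).
Proof.
apply/matrixP => r k; rewrite !mxE big_distrr /=.
by apply: eq_bigr => l _; rewrite !mxE mulrCA.
Qed.

Lemma mulmx_Ulin (R : realType) (k l : nat) (Q : 'M[R]_3) (M : 'M[R]_(k, l))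
    (w : 'M[R]_(3, k)) :
  Q *m Ulin M w = Ulin M (Q *m w).
Proof. exact: mulmxA. Qed.

Lemma mulmx_sum_hadv (R : realType) (n d : nat) (Q : 'M[R]_3) (A : {set 'I_n})
    (beta : 'I_n -> 'rV[R]_d) (v : 'I_n -> 'M[R]_(3, d)) :
  Q *m \sum_(i in A) hadv (beta i) (v i) = \sum_(i in A) hadv (beta i) (Q *m v i).
Proof. by rewrite mulmx_sumr; apply: eq_bigr => i _; rewrite mulmx_hadv. Qed.

Lemma mulmx_sum_scale (R : realType) (n k : nat) (Q : 'M[R]_3) (A : {set 'I_n})
    (gamma : 'I_n -> R) (p : 'I_n -> 'M[R]_(3, k)) :
  Q *m \sum_(i in A) gamma i *: p i = \sum_(i in A) gamma i *: (Q *m p i).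
Proof. by rewrite mulmx_sumr; apply: eq_bigr => i _; rewrite scalemxAr. Qed.

Theorem proposition1 (R : realType) (n m d e f g : nat)
  (Short_h : ('I_n -> nat) -> ('I_n -> 'cV[R]_3) -> 'I_n -> 'rV[R]_d)
  (Short_v : ('I_n -> nat) -> ('I_n -> 'cV[R]_3) -> 'I_n -> 'M[R]_(3, d))
  (S : 'I_m -> {set 'I_n})
  (alpha beta : 'I_n -> 'rV[R]_d) (gamma : 'I_n -> R)
  (W0 : 'M[R]_(d, e)) (b0 : 'rV[R]_e) (sigma0 : R -> R)
  (U0 : 'M[R]_(d, e))
  (Long_x : ('I_n -> 'rV[R]_d) -> ('I_m -> 'rV[R]_d) -> ('I_n -> 'rV[R]_e) ->
            ('I_n -> 'M[R]_(3, e)) -> ('I_n -> 'cV[R]_3) ->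
            ('I_m -> 'M[R]_(3, d)) -> ('I_m -> 'cV[R]_3) -> 'I_n -> 'rV[R]_f)
  (W1 : 'M[R]_(d + f, g)) (b1 : 'rV[R]_g) (sigma1 : R -> R)
  (short_h_inv : forall (Q : 'M[R]_3) Z p, SO3 Q ->
     Short_h Z (fun i => Q *m p i) = Short_h Z p)
  (short_v_equiv : forall (Q : 'M[R]_3) Z p, SO3 Q ->
     Short_v Z (fun i => Q *m p i) = (fun i => Q *m Short_v Z p i))
  (long_x_inv : forall (Q : 'M[R]_3) h H x0 mu0 p V P, SO3 Q ->
     Long_x h H x0 (fun i => Q *m mu0 i) (fun i => Q *m p i)
            (fun j => Q *m V j) (fun j => Q *m P j)
     = Long_x h H x0 mu0 p V P) :
  forall (Q : 'M[R]_3) (Z : 'I_n -> nat) (p : 'I_n -> 'cV[R]_3), SO3 Q ->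
    lsrmp_hout Short_h Short_v S alpha beta gamma W0 b0 sigma0 U0 Long_x
      W1 b1 sigma1 Z (fun i => Q *m p i)
    = lsrmp_hout Short_h Short_v S alpha beta gamma W0 b0 sigma0 U0 Long_x
      W1 b1 sigma1 Z p.
Proof.
move=> Q Z p SO3Q.
rewrite /lsrmp_hout /= short_h_inv // short_v_equiv //.
set v := Short_v Z p.
have rot_V : (fun j => \sum_(i in S j) hadv (beta i) (Q *m v i))
           = (fun j => Q *m \sum_(i in S j) hadv (beta i) (v i)).
  by apply: functional_extensionality => j; rewrite mulmx_sum_hadv.
have rot_P : (fun j => \sum_(i in S j) gamma i *: (Q *m p i))
           = (fun j => Q *m \sum_(i in S j) gamma i *: p i).
  by apply: functional_extensionality => j; rewrite mulmx_sum_scale.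
have rot_mu0 : (fun i => Ulin U0 (Q *m v i)) = (fun i => Q *m Ulin U0 (v i)).
  by apply: functional_extensionality => i; rewrite mulmx_Ulin.
by rewrite rot_V rot_P rot_mu0 long_x_inv.
Qed.
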